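(* Assume the setting in the context (the additive model, the Causal Faithfulness Condition, and the function class $\mathcal G$ satisfying the residual-dependence assumption). Let $x_i, x_j, x_{k_1},\dots,x_{k_m}\in X$ be distinct observed variables and let $K=\{x_{k_1},\dots,x_{k_m}\}$. Suppose that: (a) for every $q=1,\dots,m$: for all $M\subseteq X\setminus\{x_i,x_{k_q}\}$, all $N\subseteq X\setminus\{x_j,x_{k_q}\}$ and all $G_1,G_2\in\mathcal G$, we have $x_i-G_1(M)\not\perp\!\!\!\perp x_j-G_2(N)$; (b) for all $M\subseteq X\setminus\{x_i,x_j\}$, all $N\subseteq X\setminus\{x_j\}$ and all $G_1,G_2\in\mathcal G$, we have $x_i-G_1(M)\not\perp\!\!\!\perp x_j-G_2(N)$; (c) there exist $Q_1,Q_2\subseteq K$ with $Q_1\cup Q_2=K$, functions $G_1,G_2\in\mathcal G$, and sets $M,N\subseteq X\setminus(\{x_i,x_j\}\cup K)$ such that $x_i-G_1(M\cup\{x_j\}\cup Q_1)\perp\!\!\!\perp x_j-G_2(N\cup Q_2)$. Then $x_j$ is a visible parent of $x_i$ (with respect to $X$), and each $x_{k_q}$ is a parent of $x_i$ or a parent of $x_j$ in $G$; consequently each $x_{k_q}$ is an ancestor of $x_i$.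
   Context: Model: $X$ is a finite set of observed random variables and $U$ a finite set of unobserved random variables; $V=X\cup U$ and $G=(V,E)$ is a DAG on $V$. Each $v_i\in V$ satisfies $v_i=\sum_{x_j\in \mathrm{pa}(v_i)\cap X} f^{(i)}_j(x_j)+\sum_{u_k\in\mathrm{pa}(v_i)\cap U} f^{(i)}_k(u_k)+n_i$, where the $f$'s are nonlinear functions and the external noises $n_i$ are jointly independent. ''Parent'', ''ancestor'', ''path'', ''d-separation'' refer to $G$ (a path has distinct vertices). Causal Faithfulness Condition (CFC): any conditional independence among variables of $V$ that is not entailed by d-separation in $G$ does not hold. $\perp\!\!\!\perp$ denotes statistical independence, $\not\perp\!\!\!\perp$ dependence. Function class: $\mathcal G$ is a class of generalized additive functions: for $G\in\mathcal G$ and a set $M$ of observed variables, $G(M)=\sum_{x_m\in M} g_m(x_m)$ (with $G(\emptyset)=0$). It satisfies: for any $x_i,x_j\in X$, sets $M,N\subseteq X$, $G_1,G_2\in\mathcal G$ and external noise $n_k$, if $n_k\not\perp\!\!\!\perp x_i-G_1(M)$ and $n_k\not\perp\!\!\!\perp x_j-G_2(N)$ then $x_i-G_1(M)\not\perp\!\!\!\perp x_j-G_2(N)$. Definitions, for $X'\subseteq X$ and $x_i,x_j\in X'$: an unobserved causal path (UCP) from $x_i$ to $x_j$ w.r.t. $X'$ is a directed path $x_i\to\cdots\to v_k\to x_j$ in $G$ with $v_k\notin X'$; an unobserved backdoor path (UBP) between $x_i$ and $x_j$ w.r.t. $X'$ is a path $x_i\leftarrow v_k\leftarrow\cdots\leftarrow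 v\to\cdots\to v_l\to x_j$ with $v_k,v_l\notin X'$ (allowing $v=v_k$, $v=v_l$, or $v=v_k=v_l$; $v$ may be in $X'$). ''UBP/UCP between $x_i$ and $x_j$'' means a UBP or a UCP in either direction. $x_j$ is a visible parent of $x_i$ w.r.t. $X'$ if $x_j$ is a parent of $x_i$ and there is no UBP/UCP between them w.r.t. $X'$; $(x_i,x_j)$ is a visible non-edge w.r.t. $X'$ if there is no edge between them and no UBP/UCP between them w.r.t. $X'$; $(x_i,x_j)$ is invisible w.r.t. $X'$ if there is a UBP/UCP between them w.r.t. $X'$. When $X'$ is omitted, $X'=X$. Standing facts (taken as known), for $X'\subseteq X$ and distinct $x_i,x_j\in X'$: (F1) $x_j$ is a visible parent of $x_i$ w.r.t. $X'$ iff [for all $G_1,G_2\in\mathcal G$, $M\subseteq X'\setminus\{x_i,x_j\}$, $N\subseteq X'\setminus\{x_j\}$: $x_i-G_1(M)\not\perp\!\!\!\perp x_j-G_2(N)$] and [there exist $G_1,G_2\in\mathcal G$, $M\subseteq X'\setminus\{x_i\}$, $N\subseteq X'\setminus\{x_i,x_j\}$ with $x_i-G_1(M)\perp\!\!\!\perp x_j-G_2(N)$]. (F2) $(x_i,x_j)$ is a visible non-edge w.r.t. $X'$ iff there exist $G_1,G_2\in\mathcal G$ and $M,N\subseteq X'\setminus\{x_i,x_j\}$ with $x_i-G_1(M)\perp\!\!\!\perp x_j-G_2(N)$. (F3) $(x_i,x_j)$ is invisible w.r.t. $X'$ iff for all $M\subseteq X'\setminus\{x_i\}$, $N\subseteq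 X'\setminus\{x_j\}$, $G_1,G_2\in\mathcal G$: $x_i-G_1(M)\not\perp\!\!\!\perp x_j-G_2(N)$. *)

From HB Require Import structures.
From mathcomp Require Import all_boot all_order all_algebra.
From mathcomp Require Import all_classical all_reals all_analysis.
Set Implicit Arguments. Unset Strict Implicit. Unset Printing Implicit Defensive.
Import Order.TTheory GRing.Theory Num.Theory.
Local Open Scope ring_scope.

(* Graph part: a DAG on a finite vertex type V, edge relation E (E u v means *)
(* u -> v).  Paths are lists of distinct vertices.                           *)
Section Graph.
Variable V : finType.
Variable E : rel V.

Definition acyclic : Prop := forall u v, E u v -> ~~ connect E v u.

Definition adj (u v : V) : bool := E u v || E v u.

Definition ancestor (u v : V) : bool := connect E u v.

(* Unobserved causal path from a to b w.r.t. X': a directed path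
   a -> p_1 -> ... -> p_r -> b (distinct vertices) whose last vertex before b
   is not in X'. *)
Definition UCP (X' : {set V}) (a b : V) : Prop :=
  exists p : seq V, [/\ path E a (rcons p b), uniq (a :: rcons p b)
                     & last a p \notin X'].

(* Unobserved backdoor path between a and b w.r.t. X':
   a <- v_k <- ... <- v -> ... -> v_l -> b  (distinct vertices), with
   v_k, v_l not in X' (v_k = v, v_l = v allowed; v may be in X'). *)
Definition UBP (X' : {set V}) (a b : V) : Prop :=
  exists (v : V) (p q : seq V),
    [/\ path E v (rcons p a), path E v (rcons q b),
        uniq (rev (v :: rcons p a) ++ rcons q b),
        last v p \notin X' & last v q \notin X'].

Definition UBP_or_UCP (X' : {set V}) (a b : V) : Prop :=
  UBP X' a b \/ UBP X' b a \/ UCP X' a b \/ UCP X' b a.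

Definition visible_parent (X' : {set V}) (b a : V) : Prop :=
  E b a /\ ~ UBP_or_UCP X' a b.

Definition visible_nonedge (X' : {set V}) (a b : V) : Prop :=
  ~~ adj a b /\ ~ UBP_or_UCP X' a b.

Definition invisible (X' : {set V}) (a b : V) : Prop := UBP_or_UCP X' a b.

Definition is_path (s : seq V) : bool :=
  uniq s && (if s is x :: s' then path adj x s' else true).

Definition blocked (Z : {set V}) (s : seq V) : Prop :=
  exists (s1 s2 : seq V) (u w y : V), s = s1 ++ [:: u; w; y] ++ s2 /\
    (if E u w && E y w then ~~ [exists z in Z, connect E w z]
     else w \in Z).

Definition dsep (A B Z : {set V}) : Prop :=
  forall a b (s : seq V), a \in A -> b \in B -> is_path s ->
    head a s = a -> s != [::] -> last a s = b -> blocked Z s.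

End Graph.

Local Open Scope classical_set_scope.
Section Prob.
Context {d : measure_display} {T : measurableType d} {R : realType}.
Variable P : probability T R.

Definition indep (Xr Yr : T -> R) : Prop :=
  forall A B : set R, measurable A -> measurable B ->
    P (Xr @^-1` A `&` Yr @^-1` B) = (P (Xr @^-1` A) * P (Yr @^-1` B))%E.

Definition mutually_indep (V : finType) (n : V -> T -> R) : Prop :=
  forall B : V -> set R, (forall i, measurable (B i)) ->
    P (\bigcap_i (n i @^-1` B i)) = \big[*%E/1%E]_(i : V) P (n i @^-1` B i).

Variables (V : finType) (var : V -> T -> R).

Definition sigma_of (S : {set V}) : set (set T) :=
  <<s [set A | exists (s : V) (B : set R),
                 [/\ s \in S, measurable B & A = var s @^-1` B]] >>.

Definition measurable_wrt (F : set (set T)) (h : T -> R) : Prop :=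
  forall B : set R, measurable B -> F (h @^-1` B).

Definition bounded_fun (h : T -> R) : Prop :=
  exists M : R, forall t, `|h t| <= M.

(* conditional independence  S1 _||_ S2 | S3 : for every bounded
   sigma(S1)-measurable f there is a bounded sigma(S3)-measurable g that is a
   version of E[f | sigma(S2 u S3)], i.e. E[f | S2, S3] = E[f | S3] a.s. *)
Definition cond_indep (S1 S2 S3 : {set V}) : Prop :=
  forall f : T -> R, bounded_fun f -> measurable_wrt (sigma_of S1) f ->
    exists g : T -> R, [/\ bounded_fun g, measurable_wrt (sigma_of S3) g &
      forall k : T -> R, bounded_fun k ->
        measurable_wrt (sigma_of (S2 :|: S3)) k ->
        (\int[P]_x (f x * k x)%:E = \int[P]_x (g x * k x)%:E)%E].

(* generalized additive function G(M) = sum_{m in M} g_m(x_m), and the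
   residual x_i - G(M) *)
Definition residual (i : V) (g : V -> R -> R) (M : {set V}) : T -> R :=
  fun t => var i t - \sum_(m in M) g m (var m t).

End Prob.

Definition additive_model {d : measure_display} {T : measurableType d}
    {R : realType} (P : probability T R) (V : finType) (E : rel V)
    (var : V -> T -> R) (f : V -> V -> R -> R) (noise : V -> T -> R) : Prop :=
  [/\ forall i t, var i t = \sum_(j | E j i) f i j (var j t) + noise i t,
      forall i j, E j i -> measurable_fun setT (f i j),
      forall i j, E j i -> ~ exists a b : R, forall x, f i j x = a * x + b,
      forall i, measurable_fun setT (noise i)
    & mutually_indep P noise].

Definition CFC {d : measure_display} {T : measurableType d}
    {R : realType} (P : probability T R) (V : finType) (E : rel V)
    (var : V -> T -> R) : Prop :=
  forall S1 S2 S3 : {set V},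
    disjoint (mem S1) (mem S2) -> disjoint (mem S1) (mem S3) -> disjoint (mem S2) (mem S3) ->
    cond_indep P var S1 S2 S3 -> dsep E S1 S2 S3.

Definition residual_dependence {d : measure_display} {T : measurableType d}
    {R : realType} (P : probability T R) (V : finType) (X : {set V})
    (var : V -> T -> R) (noise : V -> T -> R) (Gc : set (V -> R -> R)) : Prop :=
  forall (i j k : V) (M N : {set V}) (g1 g2 : V -> R -> R),
    i \in X -> j \in X -> M \subset X -> N \subset X -> Gc g1 -> Gc g2 ->
    ~ indep P (noise k) (residual var i g1 M) ->
    ~ indep P (noise k) (residual var j g2 N) ->
    ~ indep P (residual var i g1 M) (residual var j g2 N).

(* Standing facts F1, F2, F3 (taken as known), for all X' subset of X. *)
Definition standing_facts {d : measure_display} {T : measurableType d}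
    {R : realType} (P : probability T R) (V : finType) (E : rel V)
    (X : {set V}) (var : V -> T -> R) (Gc : set (V -> R -> R)) : Prop :=
  forall (X' : {set V}) (i j : V), X' \subset X -> i \in X' -> j \in X' ->
    i != j ->
  [/\
      visible_parent E X' j i <->
        ((forall (g1 g2 : V -> R -> R) (M N : {set V}), Gc g1 -> Gc g2 ->
            M \subset (X' :\: [set i; j])%SET -> N \subset (X' :\: [set j])%SET ->
            ~ indep P (residual var i g1 M) (residual var j g2 N)) /\
         (exists (g1 g2 : V -> R -> R) (M N : {set V}), [/\ Gc g1, Gc g2,
            M \subset (X' :\: [set i])%SET, N \subset (X' :\: [set i; j])%SET &
            indep P (residual var i g1 M) (residual var j g2 N)])),
      visible_nonedge E X' i j <->
        (exists (g1 g2 : V -> R -> R) (M N : {set V}), [/\ Gc g1, Gc g2,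
            M \subset (X' :\: [set i; j])%SET, N \subset (X' :\: [set i; j])%SET &
            indep P (residual var i g1 M) (residual var j g2 N)])
    &
      invisible E X' i j <->
        (forall (g1 g2 : V -> R -> R) (M N : {set V}), Gc g1 -> Gc g2 ->
            M \subset (X' :\: [set i])%SET -> N \subset (X' :\: [set j])%SET ->
            ~ indep P (residual var i g1 M) (residual var j g2 N))].

From HB Require Import structures.
From mathcomp Require Import all_boot all_order all_algebra.
From mathcomp Require Import all_classical all_reals all_analysis.
Set Implicit Arguments. Unset Strict Implicit. Unset Printing Implicit Defensive.
Import Order.TTheory GRing.Theory Num.Theory.
Local Open Scope ring_scope.

(* Condition (c) exhibits an independent pair of residuals, which through F1
   makes x_j a visible parent of x_i.  For x_k in K, condition (a) says that
   (x_i, x_j) is invisible w.r.t. X \ {x_k} (F3), while it is not invisible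
   w.r.t. X.  Hiding x_k can only create an unobserved causal or backdoor path
   whose last vertex before x_i or x_j is x_k itself, so x_k is a parent of
   x_i or of x_j, and hence an ancestor of x_i. *)

Section HideOneVertex.
Variables (V : finType) (E : rel V) (X : {set V}) (k : V).

Lemma last_unobserved_setD1 (p : seq V) (v : V) :
  last v p \notin (X :\ k)%SET -> last v p \notin X \/ last v p = k.
Proof. by rewrite in_setD1 negb_and negbK => /orP[/eqP|]; [right | left]. Qed.

Lemma UCP_setD1 a b : UCP E (X :\ k)%SET a b -> ~ UCP E X a b -> E k b.
Proof.
move=> [p [pab uab /last_unobserved_setD1[pX | <-]]] noUCP.
  by case: noUCP; exists p.
by move: pab; rewrite rcons_path => /andP[].
Qed.

Lemma UBP_setD1 a b : UBP E (X :\ k)%SET a b -> ~ UBP E X a b -> E k a || E k b.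
Proof.
move=> [v [p [q [pva qvb uniq_pq /last_unobserved_setD1 lp /last_unobserved_setD1 lq]]]] noUBP.
case: lp => [pX | <-]; last by move: pva; rewrite rcons_path => /andP[_ ->].
case: lq => [qX | <-]; last by move: qvb; rewrite rcons_path => /andP[_ ->]; rewrite orbT.
by case: noUBP; exists v, p, q.
Qed.

Lemma UBP_or_UCP_setD1 a b :
  UBP_or_UCP E (X :\ k)%SET a b -> ~ UBP_or_UCP E X a b -> E k a || E k b.
Proof.
move=> hidden noPath.
case: hidden => [ab | [ba | [ab | ba]]].
- by apply: UBP_setD1 ab _ => ab; apply: noPath; left.
- by rewrite orbC; apply: UBP_setD1 ba _ => ba; apply: noPath; right; left.
- by rewrite (UCP_setD1 ab) ?orbT // => ab'; apply: noPath; right; right; left.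
- by rewrite (UCP_setD1 ba) // => ba'; apply: noPath; right; right; right.
Qed.

End HideOneVertex.

Section ConditioningSets.
Variables (V : finType) (X K : {set V}) (i j : V).
Hypotheses (KX : (K \subset X)%SET) (iK : i \notin K) (jK : j \notin K).

Lemma setU_set1_subset_setD1 (M Q : {set V}) :
  j \in X -> i != j ->
  (M \subset X :\: ([set i; j] :|: K))%SET -> (Q \subset K)%SET ->
  (M :|: [set j] :|: Q \subset X :\: [set i])%SET.
Proof.
move=> jX ij /fintype.subsetP MX /fintype.subsetP QK.
apply/fintype.subsetP => x; rewrite !inE => /orP[/orP[/MX | /eqP->] | /QK xK].
- by rewrite !inE !negb_or => /andP[/andP[/andP[-> _] _] ->].
- by rewrite eq_sym ij.
- by rewrite (fintype.subsetP KX _ xK) andbT; apply: contraNneq iK => <-.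
Qed.

Lemma setU_subset_setD2 (N Q : {set V}) :
  (N \subset X :\: ([set i; j] :|: K))%SET -> (Q \subset K)%SET ->
  (N :|: Q \subset X :\: [set i; j])%SET.
Proof.
move=> /fintype.subsetP NX /fintype.subsetP QK.
apply/fintype.subsetP => x; rewrite !inE => /orP[/NX | /QK xK].
- by rewrite !inE negb_or => /andP[/andP[-> _] ->].
- rewrite (fintype.subsetP KX _ xK) andbT negb_or.
  by apply/andP; split; [apply: contraNneq iK | apply: contraNneq jK] => <-.
Qed.

End ConditioningSets.

Lemma setD1D1 (V : finType) (X : {set V}) (i k : V) :
  (X :\ k :\ i = X :\: [set i; k])%SET.
Proof. by rewrite finset.setDDl finset.setUC. Qed.

Theorem lemma4 (d : measure_display) (T : measurableType d) (R : realType)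
    (P : probability T R) (V : finType) (E : rel V) (X : {set V})
    (var noise : V -> T -> R) (f : V -> V -> R -> R) (Gc : set (V -> R -> R))
    (Hdag : acyclic E)
    (Hmodel : additive_model P E var f noise)
    (Hcfc : CFC P E var)
    (HGc : residual_dependence P X var noise Gc)
    (Hfacts : standing_facts P E X var Gc)
    (i j : V) (ks : seq V)
    (HiX : i \in X) (HjX : j \in X) (HksX : {subset ks <= X})
    (Hdistinct : uniq [:: i, j & ks])
    (Ha : forall k, k \in ks ->
       forall (g1 g2 : V -> R -> R) (M N : {set V}), Gc g1 -> Gc g2 ->
         (M \subset X :\: [set i; k])%SET -> (N \subset X :\: [set j; k])%SET ->
         ~ indep P (residual var i g1 M) (residual var j g2 N))
    (Hb : forall (g1 g2 : V -> R -> R) (M N : {set V}), Gc g1 -> Gc g2 ->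
         (M \subset X :\: [set i; j])%SET -> (N \subset X :\: [set j])%SET ->
         ~ indep P (residual var i g1 M) (residual var j g2 N))
    (Hc : exists (Q1 Q2 : {set V}) (g1 g2 : V -> R -> R) (M N : {set V}),
       [/\ (Q1 \subset [set x in ks])%SET, (Q2 \subset [set x in ks])%SET,
           (Q1 :|: Q2 = [set x in ks])%SET & Gc g1 /\ Gc g2] /\
       [/\
           (M \subset X :\: ([set i; j] :|: [set x in ks]))%SET,
           (N \subset X :\: ([set i; j] :|: [set x in ks]))%SET &
           indep P (residual var i g1 (M :|: [set j] :|: Q1)%SET)
                   (residual var j g2 (N :|: Q2)%SET)]) :
  [/\ visible_parent E X j i,
      forall k, k \in ks -> E k i || E k j
    & forall k, k \in ks -> ancestor E k i].
Proof.
move: Hdistinct => /= /andP[]; rewrite inE negb_or => /andP[ij iK] /andP[jK _].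
have KX : ([set x in ks] \subset X)%SET by apply/fintype.subsetP => x; rewrite inE => /HksX.
have [iK' jK'] : i \notin [set x in ks] /\ j \notin [set x in ks] by rewrite !inE.
have VP : visible_parent E X j i.
  have [F1 _ _] := Hfacts X i j (subxx X) HiX HjX ij.
  apply/F1; split; first exact: Hb.
  case: Hc => Q1 [Q2 [g1 [g2 [M [N [[Q1K Q2K _ [G1 G2]] [MX NX indepMN]]]]]]].
  exists g1, g2, (M :|: [set j] :|: Q1)%SET, (N :|: Q2)%SET; split => //.
  - exact (setU_set1_subset_setD1 KX iK' HjX ij MX Q1K).
  - exact (setU_subset_setD2 KX iK' jK' NX Q2K).
have parent_ij k : k \in ks -> E k i || E k j.
  move=> kK; have ik : i != k by apply: contraNneq iK => ->.
  have jk : j != k by apply: contraNneq jK => ->.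
  have iXk : i \in (X :\ k)%SET by rewrite !inE ik HiX.
  have jXk : j \in (X :\ k)%SET by rewrite !inE jk HjX.
  have [_ _ F3] := Hfacts (X :\ k)%SET i j (subD1set X k) iXk jXk ij.
  apply: (UBP_or_UCP_setD1 _ VP.2); apply/F3 => g1 g2 M N G1 G2 MX NX.
  by apply: (Ha k kK) => //; rewrite -setD1D1.
split => // k /parent_ij/orP[ki | kj]; first exact: connect1.
exact: connect_trans (connect1 kj) (connect1 VP.1).
Qed.
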